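(* Consider a region discretized by the FDTD-Q scheme described in the context, with $0<\Delta t<\Delta t_{\mathrm{CFL,gen}}=2/\rho\!\left(\frac{1}{\hbar}(D_V'')^{-1/2}H(D_V'')^{-1/2}\right)$ ($\rho$ the spectral radius). Let $\mathcal{P}_\dagger^n$ ($n=0,\dots,n_t$) and $\mathcal{I}_{P\dagger}^{n+\frac12}$ ($n=0,\dots,n_t-1$) be real numbers (representing the probability of, and probability current leaving, the space outside the region) such that $\mathcal{P}_\dagger^n\ge0$ for all $n=0,\dots,n_t$, $$\frac{\mathcal{P}_\dagger^{n+1}-\mathcal{P}_\dagger^n}{\Delta t}=-\mathcal{I}_{P\dagger}^{n+\frac12},\qquad n=0,\dots,n_t-1,$$ and $\mathcal{I}_P^{n+\frac12}=-\mathcal{I}_{P\dagger}^{n+\frac12}$ for $n=0,\dots,n_t-1$. Then $\mathcal{P}^n\le\mathcal{P}_{\max}:=\mathcal{P}^0+\mathcal{P}_\dagger^0$ for all $n=0,1,\dots,n_t$.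
   Context: Fix constants $\hbar>0$, $m>0$, cell sizes $\Delta x,\Delta y,\Delta z>0$, positive integers $n_x,n_y,n_z,n_t$ and a time step $\Delta t>0$. The region is a box made of $n_x\times n_y\times n_z$ primary cells of size $\Delta x\times\Delta y\times\Delta z$, with primary nodes $(i,j,k)$, $1\le i\le n_x+1$, $1\le j\le n_y+1$, $1\le k\le n_z+1$. Let $N=(n_x+1)(n_y+1)(n_z+1)$; vectors indexed by nodes use the ordering $i+(j-1)(n_x+1)+(k-1)(n_x+1)(n_y+1)$. Real potential values $U_{i,j,k}$ are given at the nodes; $D_U$ is the $N\times N$ diagonal matrix containing them. Let $I_p$ be the $p\times p$ identity, $\tilde I_p=\mathrm{diag}(\tfrac12,1,\dots,1,\tfrac12)$ ($p\times p$), $W_p=[0_{p\times1}\ I_p]-[I_p\ 0_{p\times 1}]$ ($p\times(p+1)$), $\otimes$ the Kronecker product, and $e\{p,q\}$ the $q\times 1$ vector with $1$ in position $p$ and zeros elsewhere. Define $D_V''=\Delta x\Delta y\Delta z\,\tilde I_{n_z+1}\otimes\tilde I_{n_y+1}\otimes\tilde I_{n_x+1}$; $D=[D_x\ D_y\ D_z]$ with $D_x=-I_{n_z+1}\otimes I_{n_y+1}\otimes W_{n_x}^T$, $D_y=-I_{n_z+1}\otimes W_{n_y}^T\otimes I_{n_x+1}$, $D_z=-W_{n_z}^T\otimes I_{n_y+1}\otimes I_{n_x+1}$; $D_S''=\mathrm{diag}(\Delta y\Delta z\,\tilde I_{n_z+1}\otimes\tilde I_{n_y+1}\otimes I_{n_x},\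 \Delta x\Delta z\,\tilde I_{n_z+1}\otimes I_{n_y}\otimes\tilde I_{n_x+1},\ \Delta x\Delta y\,I_{n_z}\otimes\tilde I_{n_y+1}\otimes\tilde I_{n_x+1})$; $D_l'=\mathrm{diag}(\Delta x\, I_{n_x(n_y+1)(n_z+1)},\ \Delta y\, I_{(n_x+1)n_y(n_z+1)},\ \Delta z\, I_{(n_x+1)(n_y+1)n_z})$; $H=\frac{\hbar^2}{2m}D D_S''(D_l')^{-1}D^T+D_V''D_U$; $\mathbf{P}=\begin{bmatrix}D_V''&-\frac{\Delta t}{2\hbar}H\\-\frac{\Delta t}{2\hbar}H&D_V''\end{bmatrix}$. Boundary (''hanging'') variables: $L=[L_W\ L_E\ L_S\ L_N\ L_B\ L_T]$ with $L_W=I_{n_z+1}\otimes I_{n_y+1}\otimes e\{1,n_x+1\}$, $L_E=I_{n_z+1}\otimes I_{n_y+1}\otimes e\{n_x+1,n_x+1\}$, $L_S=I_{n_z+1}\otimes e\{1,n_y+1\}\otimes I_{n_x+1}$, $L_N=I_{n_z+1}\otimes e\{n_y+1,n_y+1\}\otimes I_{n_x+1}$, $L_B=e\{1,n_z+1\}\otimes I_{n_y+1}\otimes I_{n_x+1}$, $L_T=e\{n_z+1,n_z+1\}\otimes I_{n_y+1}\otimes I_{n_x+1}$; let $M$ be the number of columns of $L$. $D_{\hat n}=\mathrm{diag}(-I_{(n_y+1)(n_z+1)},I_{(n_y+1)(n_z+1)},-I_{(n_x+1)(n_z+1)},I_{(n_x+1)(n_z+1)},-I_{(n_x+1)(n_y+1)},I_{(n_x+1)(n_y+1)})$;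 $D_{S,b}''=\mathrm{diag}(\Delta y\Delta z\,\tilde I_{n_z+1}\otimes\tilde I_{n_y+1},\ \Delta y\Delta z\,\tilde I_{n_z+1}\otimes\tilde I_{n_y+1},\ \Delta x\Delta z\,\tilde I_{n_z+1}\otimes\tilde I_{n_x+1},\ \Delta x\Delta z\,\tilde I_{n_z+1}\otimes\tilde I_{n_x+1},\ \Delta x\Delta y\,\tilde I_{n_y+1}\otimes\tilde I_{n_x+1},\ \Delta x\Delta y\,\tilde I_{n_y+1}\otimes\tilde I_{n_x+1})$; $H_\perp=\frac{\hbar^2}{2m}L D_{\hat n}D_{S,b}''$. FDTD-Q scheme: real vectors $\psi_R^n\in\mathbb{R}^N$ and $\psi_I^{n-\frac12}\in\mathbb{R}^N$ ($n=0,\dots,n_t$), and arbitrary boundary vectors $g_R^n\in\mathbb{R}^M$, $g_I^{n+\frac12}\in\mathbb{R}^M$ ($n=0,\dots,n_t-1$), satisfying for $n=0,\dots,n_t-1$: $\hbar D_V''\frac{\psi_R^{n+1}-\psi_R^n}{\Delta t}=H\psi_I^{n+\frac12}-H_\perp g_I^{n+\frac12}$ and $\hbar D_V''\frac{\psi_I^{n+\frac12}-\psi_I^{n-\frac12}}{\Delta t}=-H\psi_R^n+H_\perp g_R^n$. Let $\psi^n=\begin{bmatrix}\psi_R^n\\ \psi_I^{n-\frac12}\end{bmatrix}$, $g^{n+\frac12}=\begin{bmatrix}g_R^n\\ g_I^{n+\frac12}\end{bmatrix}$, $J_1=\begin{bmatrix}0&1\\-1&0\end{bmatrix}$. Total probability: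 $\mathcal{P}^n=(\psi^n)^T\mathbf{P}\psi^n$, $n=0,\dots,n_t$. Probability current: $\mathcal{I}_P^{n+\frac12}=\frac{2}{\hbar}\left(\frac{\psi^{n+1}+\psi^n}{2}\right)^T(J_1\otimes H_\perp)g^{n+\frac12}$, $n=0,\dots,n_t-1$. *)

From HB Require Import structures.
From mathcomp Require Import all_boot all_order all_algebra.
From mathcomp Require Import classical_sets reals.
From mathcomp.real_closed Require Export complex mxtens.
Set Implicit Arguments. Unset Strict Implicit. Unset Printing Implicit Defensive.
Import Order.TTheory GRing.Theory Num.Theory.
Local Open Scope ring_scope.

Section FDTDQ.
Variable R : realType.

(* Kronecker product (standard ordering: (i1,i2) |-> i1 * m2 + i2). *)
Definition kron {m n p q : nat} (A : 'M[R]_(m, n)) (B : 'M[R]_(p, q)) :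
  'M[R]_(m * p, n * q) := tensmx A B.

Definition Itil (p : nat) : 'M[R]_p :=
  \matrix_(i, j) (if i == j then
                    (if (i == 0%N :> nat) || (i == p.-1 :> nat) then 2^-1 else 1)
                  else 0).

Definition Wmx (p : nat) : 'M[R]_(p, p.+1) :=
  \matrix_(i, j) (((j : nat) == i.+1)%:R - ((j : nat) == i)%:R).

(* e{p,q}: q x 1 vector with 1 in (1-based) position p *)
Definition evec (p q : nat) : 'M[R]_(q, 1) :=
  \col_(i < q) ((i.+1 == p)%:R).

Definition bdiag {m n : nat} (A : 'M[R]_m) (B : 'M[R]_n) : 'M[R]_(m + n) :=
  block_mx A 0 0 B.

Definition cmod (z : R[i]) : R :=
  match z with Complex a b => Num.sqrt (a ^+ 2 + b ^+ 2) end.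
Definition spectral_radius {n : nat} (A : 'M[R]_n) : R :=
  sup [set cmod z | z in [set z : R[i] |
        eigenvalue (map_mx (fun x : R => x%:C%C) A) z]].

Variables (hbar mass dx dy dz : R) (nx ny nz : nat).

Local Notation Nn := ((nz.+1) * ((ny.+1) * (nx.+1)))%N.
Local Notation Ix := (1%:M : 'M[R]_(nx.+1)).
Local Notation Iy := (1%:M : 'M[R]_(ny.+1)).
Local Notation Iz := (1%:M : 'M[R]_(nz.+1)).

Definition DVpp : 'M[R]_Nn :=
  (dx * dy * dz) *: kron (Itil nz.+1) (kron (Itil ny.+1) (Itil nx.+1)).

Definition DVpp_isqrt : 'M[R]_Nn :=
  \matrix_(i, j) (if i == j then (Num.sqrt (DVpp i i))^-1 else 0).

Definition Dx := - kron Iz (kron Iy (Wmx nx)^T).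
Definition Dy := - kron Iz (kron (Wmx ny)^T Ix).
Definition Dz := - kron (Wmx nz)^T (kron Iy Ix).
Definition Dmx := row_mx Dx (row_mx Dy Dz).

Definition DSpp :=
  bdiag ((dy * dz) *: kron (Itil nz.+1) (kron (Itil ny.+1) (1%:M : 'M[R]_nx)))
   (bdiag ((dx * dz) *: kron (Itil nz.+1) (kron (1%:M : 'M[R]_ny) (Itil nx.+1)))
          ((dx * dy) *: kron (1%:M : 'M[R]_nz) (kron (Itil ny.+1) (Itil nx.+1)))).

Definition Dlp_inv :=
  bdiag (dx^-1 *: (1%:M : 'M[R]_(nz.+1 * (ny.+1 * nx))))
   (bdiag (dy^-1 *: (1%:M : 'M[R]_(nz.+1 * (ny * nx.+1))))
          (dz^-1 *: (1%:M : 'M[R]_(nz * (ny.+1 * nx.+1))))).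

Definition DU (U : 'cV[R]_Nn) : 'M[R]_Nn := diag_mx U^T.

Definition Hmx (U : 'cV[R]_Nn) : 'M[R]_Nn :=
  (hbar ^+ 2 / (2 * mass)) *: (Dmx *m DSpp *m Dlp_inv *m Dmx^T)
  + DVpp *m DU U.

Definition Pmx (dt : R) (U : 'cV[R]_Nn) : 'M[R]_(Nn + Nn) :=
  block_mx DVpp (- (dt / (2 * hbar)) *: Hmx U)
           (- (dt / (2 * hbar)) *: Hmx U) DVpp.

(* boundary ("hanging") variables; the trailing Kronecker factors of
   size 1 are removed by casts along muln1 / mul1n. *)
Definition LW := castmx (erefl, congr1 (muln nz.+1) (muln1 ny.+1))
                   (kron Iz (kron Iy (evec 1 nx.+1))).
Definition LE := castmx (erefl, congr1 (muln nz.+1) (muln1 ny.+1))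
                   (kron Iz (kron Iy (evec nx.+1 nx.+1))).
Definition LS := castmx (erefl, congr1 (muln nz.+1) (mul1n nx.+1))
                   (kron Iz (kron (evec 1 ny.+1) Ix)).
Definition LN := castmx (erefl, congr1 (muln nz.+1) (mul1n nx.+1))
                   (kron Iz (kron (evec ny.+1 ny.+1) Ix)).
Definition LB := castmx (erefl, mul1n (ny.+1 * nx.+1))
                   (kron (evec 1 nz.+1) (kron Iy Ix)).
Definition LT := castmx (erefl, mul1n (ny.+1 * nx.+1))
                   (kron (evec nz.+1 nz.+1) (kron Iy Ix)).
Definition Lmx := row_mx LW (row_mx LE (row_mx LS (row_mx LN (row_mx LB LT)))).

Local Notation Myz := (nz.+1 * ny.+1)%N.
Local Notation Mxz := (nz.+1 * nx.+1)%N.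
Local Notation Mxy := (ny.+1 * nx.+1)%N.
Local Notation Mall := (Myz + (Myz + (Mxz + (Mxz + (Mxy + Mxy)))))%N.

Definition Dnhat : 'M[R]_Mall :=
  bdiag (- 1%:M) (bdiag 1%:M (bdiag (- 1%:M) (bdiag 1%:M (bdiag (- 1%:M) 1%:M)))).

Definition DSbpp : 'M[R]_Mall :=
  bdiag ((dy * dz) *: kron (Itil nz.+1) (Itil ny.+1))
 (bdiag ((dy * dz) *: kron (Itil nz.+1) (Itil ny.+1))
 (bdiag ((dx * dz) *: kron (Itil nz.+1) (Itil nx.+1))
 (bdiag ((dx * dz) *: kron (Itil nz.+1) (Itil nx.+1))
 (bdiag ((dx * dy) *: kron (Itil ny.+1) (Itil nx.+1))
        ((dx * dy) *: kron (Itil ny.+1) (Itil nx.+1)))))).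

Definition Hperp : 'M[R]_(Nn, Mall) :=
  (hbar ^+ 2 / (2 * mass)) *: (Lmx *m Dnhat *m DSbpp).

(* J_1 (x) H_perp, written out as a 2 x 2 block matrix *)
Definition J1Hperp : 'M[R]_(Nn + Nn, Mall + Mall) :=
  block_mx 0 Hperp (- Hperp) 0.

Definition totprob (dt : R) (U : 'cV[R]_Nn) (psi : 'cV[R]_(Nn + Nn)) : R :=
  ((psi^T *m Pmx dt U *m psi) 0 0).

Definition probcurrent (psi_next psi : 'cV[R]_(Nn + Nn))
    (g : 'cV[R]_(Mall + Mall)) : R :=
  (2 / hbar) * (((2^-1 *: (psi_next + psi))^T *m J1Hperp *m g) 0 0).
  
End FDTDQ.

Notation Nnodes nx ny nz := ((nz.+1) * ((ny.+1) * (nx.+1)))%N.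
Notation Mbnd nx ny nz :=
  ((nz.+1 * ny.+1) + ((nz.+1 * ny.+1) + ((nz.+1 * nx.+1) + ((nz.+1 * nx.+1)
    + ((ny.+1 * nx.+1) + (ny.+1 * nx.+1))))))%N.

(* The FDTD-Q update is a leapfrog step for a symmetric Hamiltonian: pairing
   the real update with psi_R^{n+1} + psi_R^n and the imaginary one with
   psi_I^{n+1/2} + psi_I^{n-1/2}, the interior terms cancel because H and
   D_V'' are symmetric, and what is left is the discrete continuity law
   P^{n+1} - P^n = - dt I_P^{n+1/2}.  Together with the exterior law this
   makes P^n + P_dag^n constant, and P_dag^n >= 0 gives the bound. *)
From HB Require Import structures.
From mathcomp Require Import all_boot all_order all_algebra.
From mathcomp Require Import classical_sets reals.
From mathcomp Require Import ring lra.
From mathcomp.real_closed Require Import mxtens.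
Set Implicit Arguments. Unset Strict Implicit. Unset Printing Implicit Defensive.
Import Order.TTheory GRing.Theory Num.Theory.
Local Open Scope ring_scope.

Section DiagonalMatrices.
Variable R : comPzRingType.

Lemma is_diag_mx_sym n (A : 'M[R]_n) : is_diag_mx A -> A^T = A.
Proof. by case/diag_mxP => d ->; rewrite tr_diag_mx. Qed.

Lemma is_diag_mxZ m n c (A : 'M[R]_(m, n)) :
  is_diag_mx A -> is_diag_mx (c *: A).
Proof.
by move=> /is_diag_mxP dA; apply/is_diag_mxP => i j ij; rewrite mxE dA ?mulr0.
Qed.

Lemma is_diag_mxM n (A B : 'M[R]_n) :
  is_diag_mx A -> is_diag_mx B -> is_diag_mx (A *m B).
Proof.
case/diag_mxP => d -> /is_diag_mxP dB.
by apply/is_diag_mxP => i j ij; rewrite mul_diag_mx mxE dB ?mulr0.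
Qed.

Lemma is_diag_tensmx m n (A : 'M[R]_m) (B : 'M[R]_n) :
  is_diag_mx A -> is_diag_mx B -> is_diag_mx (A *t B).
Proof.
move=> /is_diag_mxP dA /is_diag_mxP dB; apply/is_diag_mxP => i j.
case: (mxtens_indexP i) => i1 i2; case: (mxtens_indexP j) => j1 j2.
rewrite tensmxE.
have [<-|/dA->] := eqVneq i1 j1; last by rewrite mul0r.
by have [<-|/dB->] := eqVneq i2 j2; rewrite ?eqxx ?mulr0.
Qed.

Lemma trmx_conj_sym m n (A : 'M[R]_(m, n)) (S : 'M[R]_n) :
  S^T = S -> (A *m S *m A^T)^T = A *m S *m A^T.
Proof. by move=> sS; rewrite !trmx_mul trmxK sS mulmxA. Qed.

End DiagonalMatrices.

Section FDTDQSymmetry.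
Variable R : realType.

Lemma is_diag_bdiag m n (A : 'M[R]_m) (B : 'M[R]_n) :
  is_diag_mx (bdiag A B) = is_diag_mx A && is_diag_mx B.
Proof. by rewrite /bdiag is_diag_block_mx // !eqxx. Qed.

Lemma is_diag_Itil p : is_diag_mx (Itil R p).
Proof.
by apply/is_diag_mxP => i j ij; rewrite mxE -(inj_eq val_inj) (negbTE ij).
Qed.

Variables (hbar mass dx dy dz : R) (nx ny nz : nat).

Lemma is_diag_DVpp : is_diag_mx (DVpp dx dy dz nx ny nz).
Proof. by rewrite is_diag_mxZ // !is_diag_tensmx // is_diag_Itil. Qed.

Lemma is_diag_DSpp : is_diag_mx (DSpp dx dy dz nx ny nz).
Proof.
by rewrite !is_diag_bdiag !is_diag_mxZ // !is_diag_tensmx //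
  ?is_diag_Itil // scalar_mx_is_diag.
Qed.

Lemma is_diag_Dlp_inv : is_diag_mx (Dlp_inv dx dy dz nx ny nz).
Proof. by rewrite !is_diag_bdiag !is_diag_mxZ // scalar_mx_is_diag. Qed.

Lemma Hmx_sym (U : 'cV[R]_(Nnodes nx ny nz)) :
  (Hmx hbar mass dx dy dz U)^T = Hmx hbar mass dx dy dz U.
Proof.
have SL_diag := is_diag_mxM is_diag_DSpp is_diag_Dlp_inv.
have VU_diag := is_diag_mxM is_diag_DVpp (diag_mx_is_diag U^T).
rewrite /Hmx linearD linearZ /= -[Dmx _ _ _ _ *m _ *m _](mulmxA _ (DSpp _ _ _ _ _ _)).
by rewrite trmx_conj_sym ?is_diag_mx_sym.
Qed.

End FDTDQSymmetry.

Section Pairing.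
Variable R : comPzRingType.

Definition vdot n (u v : 'cV[R]_n) : R := (u^T *m v) 0 0.

Lemma vdotDl n (u1 u2 v : 'cV[R]_n) : vdot (u1 + u2) v = vdot u1 v + vdot u2 v.
Proof. by rewrite /vdot linearD mulmxDl mxE. Qed.

Lemma vdotDr n (u v1 v2 : 'cV[R]_n) : vdot u (v1 + v2) = vdot u v1 + vdot u v2.
Proof. by rewrite /vdot mulmxDr mxE. Qed.

Lemma vdotNr n (u v : 'cV[R]_n) : vdot u (- v) = - vdot u v.
Proof. by rewrite /vdot mulmxN mxE. Qed.

Lemma vdotBr n (u v1 v2 : 'cV[R]_n) : vdot u (v1 - v2) = vdot u v1 - vdot u v2.
Proof. by rewrite vdotDr vdotNr. Qed.

Lemma vdotZl n c (u v : 'cV[R]_n) : vdot (c *: u) v = c * vdot u v.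
Proof. by rewrite /vdot linearZ -scalemxAl mxE. Qed.

Lemma vdotZr n c (u v : 'cV[R]_n) : vdot u (c *: v) = c * vdot u v.
Proof. by rewrite /vdot -scalemxAr mxE. Qed.

Lemma vdot_col m n (a : 'cV[R]_m) (b : 'cV[R]_n) x y :
  vdot (col_mx a b) (col_mx x y) = vdot a x + vdot b y.
Proof. by rewrite /vdot tr_col_mx mul_row_col mxE. Qed.

Lemma vdot_trmx n (A : 'M[R]_n) (u v : 'cV[R]_n) :
  vdot u (A *m v) = vdot v (A^T *m u).
Proof.
rewrite /vdot; have -> : (u^T *m (A *m v)) 0 0 = (u^T *m (A *m v))^T 0 0.
  by rewrite [RHS]mxE.
by rewrite !trmx_mul trmxK mulmxA.
Qed.

Lemma vdot_sym n (S : 'M[R]_n) (u v : 'cV[R]_n) :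
  S^T = S -> vdot u (S *m v) = vdot v (S *m u).
Proof. by move=> sS; rewrite vdot_trmx sS. Qed.

Lemma vdot_sym_diff n (S : 'M[R]_n) (u v : 'cV[R]_n) : S^T = S ->
  vdot u (S *m u) - vdot v (S *m v) = vdot (u + v) (S *m (u - v)).
Proof.
move=> sS; rewrite mulmxBr vdotBr !vdotDl (vdot_sym v u sS).
by rewrite opprD addrA addrK.
Qed.

End Pairing.

Section SymmetricLeapfrog.
Variables (R : numFieldType) (N M : nat).
Variables (D H : 'M[R]_N) (Hp : 'M[R]_(N, M)) (hbar dt : R).
Hypotheses (hbar_neq0 : hbar != 0) (dt_neq0 : dt != 0).
Hypotheses (D_sym : D^T = D) (H_sym : H^T = H).

Local Notation P := (block_mx D (- (dt / (2 * hbar)) *: H)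
                              (- (dt / (2 * hbar)) *: H) D).
Local Notation J := (block_mx 0 Hp (- Hp) 0 : 'M[R]_(N + N, M + M)).

Lemma leapfrog_increment p (x x' : 'M[R]_(N, p)) y :
  hbar *: (D *m (dt^-1 *: (x' - x))) = y -> D *m (x' - x) = (dt / hbar) *: y.
Proof.
by move<-; rewrite -!scalemxAr !scalerA divfK // divff // scale1r.
Qed.

Lemma leapfrog_energy (a b : 'cV[R]_N) :
  vdot (col_mx a b) (P *m col_mx a b)
  = vdot a (D *m a) + vdot b (D *m b) - dt / hbar * vdot a (H *m b).
Proof.
rewrite mul_block_col vdot_col !vdotDr -!scalemxAl !vdotZr (vdot_sym b a H_sym).
by field.
Qed.

Lemma leapfrog_current (a a' b b' : 'cV[R]_N) (gR gI : 'cV[R]_M) :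
  (2 / hbar) * vdot (2^-1 *: (col_mx a' b' + col_mx a b)) (J *m col_mx gR gI)
  = (vdot (a' + a) (Hp *m gI) - vdot (b' + b) (Hp *m gR)) / hbar.
Proof.
rewrite add_col_mx mul_block_col !mul0mx add0r addr0 mulNmx vdotZl vdot_col vdotNr.
by field.
Qed.

Lemma leapfrog_energy_step (a a' b b' : 'cV[R]_N) (gR gI : 'cV[R]_M) :
  hbar *: (D *m (dt^-1 *: (a' - a))) = H *m b' - Hp *m gI ->
  hbar *: (D *m (dt^-1 *: (b' - b))) = - (H *m a) + Hp *m gR ->
  vdot (col_mx a' b') (P *m col_mx a' b') - vdot (col_mx a b) (P *m col_mx a b)
  = - dt * ((2 / hbar)
       * vdot (2^-1 *: (col_mx a' b' + col_mx a b)) (J *m col_mx gR gI)).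
Proof.
move=> /leapfrog_increment stepR /leapfrog_increment stepI.
have := vdot_sym_diff a' a D_sym; rewrite stepR vdotZr vdotBr.
move/eqP; rewrite subr_eq => /eqP energyR.
have := vdot_sym_diff b' b D_sym; rewrite stepI vdotZr vdotDr vdotNr.
move/eqP; rewrite subr_eq => /eqP energyI.
rewrite leapfrog_current !leapfrog_energy energyR energyI !vdotDl.
rewrite (vdot_sym a b' H_sym) (vdot_sym b a H_sym).
by field.
Qed.

End SymmetricLeapfrog.

Lemma conserved_sum_bound (R : numDomainType) (E F : nat -> R) (nt : nat) :
  (forall n, (n < nt)%N -> E n.+1 + F n.+1 = E n + F n) ->
  (forall n, (n <= nt)%N -> 0 <= F n) ->
  forall n, (n <= nt)%N -> E n <= E 0 + F 0.
Proof.
move=> step F_ge0.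
have sum_const n : (n <= nt)%N -> E n + F n = E 0 + F 0.
  by elim: n => [//|n IH] lt_n; rewrite step // IH // ltnW.
by move=> n le_n; rewrite -(sum_const n le_n) lerDl F_ge0.
Qed.

Theorem lemma2 (R : realType) (hbar mass dx dy dz dt : R) (nx ny nz nt : nat)
  (U : 'cV[R]_(Nnodes nx ny nz))
  (psiR psiI : nat -> 'cV[R]_(Nnodes nx ny nz))
  (gR gI : nat -> 'cV[R]_(Mbnd nx ny nz))
  (Pdag Idag : nat -> R) :
  0 < hbar -> 0 < mass -> 0 < dx -> 0 < dy -> 0 < dz ->
  (0 < nx)%N -> (0 < ny)%N -> (0 < nz)%N -> (0 < nt)%N ->
  0 < dt ->
  dt < 2 / spectral_radius
         (hbar^-1 *: (DVpp_isqrt dx dy dz nx ny nz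
                       *m Hmx hbar mass dx dy dz U
                       *m DVpp_isqrt dx dy dz nx ny nz)) ->
  (* FDTD-Q scheme; psiI k stands for psi_I^{k-1/2}, gI n for g_I^{n+1/2},
     gR n for g_R^n *)
  (forall n, (n < nt)%N ->
     hbar *: (DVpp dx dy dz nx ny nz *m (dt^-1 *: (psiR n.+1 - psiR n)))
     = Hmx hbar mass dx dy dz U *m psiI n.+1
       - Hperp hbar mass dx dy dz nx ny nz *m gI n) ->
  (forall n, (n < nt)%N ->
     hbar *: (DVpp dx dy dz nx ny nz *m (dt^-1 *: (psiI n.+1 - psiI n)))
     = - (Hmx hbar mass dx dy dz U *m psiR n)
       + Hperp hbar mass dx dy dz nx ny nz *m gR n) ->
  (forall n, (n <= nt)%N -> 0 <= Pdag n) ->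
  (forall n, (n < nt)%N -> (Pdag n.+1 - Pdag n) / dt = - Idag n) ->
  (forall n, (n < nt)%N ->
     probcurrent hbar mass dx dy dz
       (col_mx (psiR n.+1) (psiI n.+1)) (col_mx (psiR n) (psiI n))
       (col_mx (gR n) (gI n)) = - Idag n) ->
  forall n, (n <= nt)%N ->
    totprob hbar mass dx dy dz dt U (col_mx (psiR n) (psiI n))
    <= totprob hbar mass dx dy dz dt U (col_mx (psiR 0) (psiI 0)) + Pdag 0.
Proof.
move=> hbar_gt0 _ _ _ _ _ _ _ _ dt_gt0 _ schemeR schemeI Pdag_ge0 Pdag_step current.
have [hbar_neq0 dt_neq0] := (lt0r_neq0 hbar_gt0, lt0r_neq0 dt_gt0).
apply: conserved_sum_bound Pdag_ge0 => n lt_n.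
have energy_step :
    totprob hbar mass dx dy dz dt U (col_mx (psiR n.+1) (psiI n.+1))
    - totprob hbar mass dx dy dz dt U (col_mx (psiR n) (psiI n))
  = - dt * probcurrent hbar mass dx dy dz (col_mx (psiR n.+1) (psiI n.+1))
             (col_mx (psiR n) (psiI n)) (col_mx (gR n) (gI n)).
  rewrite /totprob /probcurrent /Pmx /J1Hperp -!mulmxA.
  exact: (leapfrog_energy_step hbar_neq0 dt_neq0
    (is_diag_mx_sym (is_diag_DVpp dx dy dz nx ny nz))
    (Hmx_sym hbar mass dx dy dz U)
    (schemeR n lt_n) (schemeI n lt_n)).
have exterior_step : Pdag n.+1 - Pdag n = - Idag n * dt.
  by rewrite -(Pdag_step n lt_n) divfK.
rewrite current // in energy_step.
lra.
Qed.
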